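(* Let $X=\{v_1,\dots,v_n\}$ be a set of $n$ unit vectors in $\mathbb{R}^d$ such that $\langle v_i,v_j\rangle\in\{a,b\}$ for all $i\neq j$, where $-1\le a<b<1$. Let $G=(\langle v_i,v_j\rangle)_{i,j=1}^n$ be its Gram matrix, $J$ the $n\times n$ all-ones matrix, and \[ S=\frac{2G-(a+b)J+(a+b-2)I}{b-a}. \] Let $\lambda_1\ge\dots\ge\lambda_n$ be the eigenvalues of $S$ counted with multiplicity. (i) If $a+b\ge 0$, then $\lambda_i=\frac{a+b-2}{b-a}$ for all $d+1\le i\le n-1$ and $\lambda_n\le\frac{a+b-2}{b-a}$; i.e. $S$ has smallest eigenvalue $\lambda_n$ (counted once) and second smallest eigenvalue $\frac{a+b-2}{b-a}$ with multiplicity at least $n-d-1$. (ii) If $a+b<0$, then the smallest eigenvalue of $S$ is $\frac{a+b-2}{b-a}$, with multiplicity at least $n-d-1$.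
   Context: $S$ is a Seidel matrix: a real symmetric matrix with zero diagonal and off-diagonal entries $\pm1$ (the entry is $+1$ where the inner product is $b$ and $-1$ where it is $a$). *)

From HB Require Import structures.
From mathcomp Require Import all_boot all_order all_algebra.
From mathcomp Require Import reals.
Set Implicit Arguments. Unset Strict Implicit. Unset Printing Implicit Defensive.
Import Order.TTheory GRing.Theory Num.Theory.
Local Open Scope ring_scope.

Definition dotv (R : realType) (d : nat) (x y : 'rV[R]_d) : R :=
  \sum_(k < d) x 0 k * y 0 k.

Definition gram (R : realType) (n d : nat) (v : 'I_n -> 'rV[R]_d) : 'M[R]_n :=
  \matrix_(i, j) dotv (v i) (v j).

Definition seidelS (R : realType) (n d : nat) (a b : R)
    (v : 'I_n -> 'rV[R]_d) : 'M[R]_n :=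
  (b - a)^-1 *: (2 *: gram v - (a + b) *: const_mx 1 + (a + b - 2)%:M).

(* s lists the eigenvalues of M with multiplicity, in non-increasing order:
   lambda_1 >= ... >= lambda_n, with lambda_(i+1) = s`_i. *)
Definition eigenvalues_desc (R : realType) (n : nat) (M : 'M[R]_n)
    (s : seq R) : Prop :=
  sorted (fun x y => y <= x) s /\
  char_poly M = \prod_(x <- s) ('X - x%:P).

From HB Require Import structures.
From mathcomp Require Import all_boot all_order all_algebra.
From mathcomp Require Import reals.
From mathcomp Require Import zify complex spectral.
Import Order.TTheory GRing.Theory Num.Theory.
Local Open Scope ring_scope.

Set Implicit Arguments. Unset Strict Implicit. Unset Printing Implicit Defensive.

(* A symmetric matrix A with
   A - c I = X X^T - Y Y^T, X with p columns and Y with q, has at most p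
   eigenvalues above c and at most q below c: otherwise some vector supported on
   the eigendirections with eigenvalue > c is orthogonal to the columns of X, and
   its quadratic form is both positive and nonpositive.  For a + b >= 0 take
   X ~ V and Y ~ j (p = d, q = 1); for a + b < 0 take X ~ [V j] and Y = 0
   (p = d + 1, q = 0). *)

Section SupportedKernelVector.
Variable F : fieldType.

Lemma supported_left_kernel_nz n p (I : pred 'I_n) (K : 'M[F]_(n, p)) :
  (p < #|I|)%N ->
  exists u : 'rV[F]_n, [/\ u != 0, u *m K = 0 & forall i, i \notin I -> u 0 i = 0].
Proof.
move=> pI.
pose E : 'M[F]_(#|I|, n) := \matrix_(j, i) (i == enum_val j)%:R.
have EEt : E *m E^T = 1%:M.
  apply/matrixP => j k; rewrite !mxE (bigD1 (enum_val j)) //= big1 ?addr0.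
    by rewrite !mxE eqxx (inj_eq enum_val_inj) mul1r; case: (j == k).
  by move=> i /negPf ne; rewrite !mxE ne mul0r.
have rankE : \rank E = #|I|.
  apply/eqP; rewrite eqn_leq rank_leq_row /=.
  by apply: (@mulmx1_min_rank _ _ _ _ E 1%:M E^T); rewrite mul1mx.
have rank_cap : (0 < \rank (E :&: kermx K))%N.
  have := mxrank_sum_cap E (kermx K); rewrite rankE mxrank_ker.
  have := rank_leq_col (E + kermx K)%MS; have := rank_leq_col K; lia.
set u := nz_row (E :&: kermx K)%MS.
have uE : (u <= E)%MS := submx_trans (nz_row_sub _) (capmxSl _ _).
have uK : (u <= kermx K)%MS := submx_trans (nz_row_sub _) (capmxSr _ _).
exists u; split.
- by rewrite nz_row_eq0 -mxrank_eq0 -lt0n.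
- exact/sub_kermxP.
- move=> i iI; case/submxP: uE => x ->; rewrite !mxE big1 // => j _.
  rewrite !mxE; case: eqP => [ij | _]; last by rewrite mulr0.
  by move: iI; rewrite ij enum_valP.
Qed.

End SupportedKernelVector.

Lemma char_poly_similar (R : comNzRingType) n (A P Q : 'M[R]_n) :
  Q *m P = 1%:M -> char_poly (Q *m A *m P) = char_poly A.
Proof.
move=> QP.
have QPpoly : map_mx polyC Q *m map_mx polyC P = 1%:M.
  by rewrite -map_mxM QP map_mx1.
rewrite /char_poly; have -> : char_poly_mx (Q *m A *m P) =
          map_mx polyC Q *m char_poly_mx A *m map_mx polyC P.
  rewrite /char_poly_mx mulmxBr mulmxBl -!map_mxM.
  by rewrite -[_ *m 'X%:M *m _]mulmxA -scalar_mxC mulmxA QPpoly mul1mx.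
rewrite !det_mulmx mulrC mulrA -det_mulmx.
by rewrite (mulmx1C QPpoly) det1 mul1r.
Qed.

Section Inertia.
Local Open Scope sesquilinear_scope.
Variable C : numClosedFieldType.

Lemma form_diag_mx n (u D : 'rV[C]_n) :
  (u *m diag_mx D *m u ^t*) 0 0 = \sum_i D 0 i * (u 0 i * (u 0 i)^*).
Proof.
rewrite mul_mx_diag mxE; apply: eq_bigr => i _.
by rewrite !mxE mulrCA mulrA.
Qed.

Lemma form_diag_mx_gt0 n (u D : 'rV[C]_n) :
  u != 0 -> (forall i, u 0 i != 0 -> 0 < D 0 i) ->
  0 < (u *m diag_mx D *m u ^t*) 0 0.
Proof.
move=> u_nz Dpos; have [i ui] : exists i, u 0 i != 0.
  apply/existsP; apply: contraR u_nz; rewrite negb_exists => /forallP u0.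
  by apply/eqP/rowP => i; rewrite mxE; apply/eqP; move: (u0 i); rewrite negbK.
rewrite form_diag_mx (bigD1 i) //=; apply: ltr_wpDr.
  apply: sumr_ge0 => j _; have [-> | uj] := eqVneq (u 0 j) 0.
    by rewrite mul0r mulr0.
  by rewrite mulr_ge0 ?mul_conjC_ge0 // ltW ?Dpos.
by rewrite mulr_gt0 ?Dpos // mul_conjC_gt0.
Qed.

Lemma card_spectral_gt0_le n p q (P : 'M[C]_n) (D : 'rV[C]_n)
    (X : 'M[C]_(n, p)) (Y : 'M[C]_(n, q)) :
  P \is unitarymx -> P ^t* *m diag_mx D *m P = X *m X ^t* - Y *m Y ^t* ->
  (#|[pred i : 'I_n | (0 < D 0 i)%R]| <= p)%N.
Proof.
move=> /unitarymxP PPt decA; rewrite leqNgt; apply/negP.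
case/(supported_left_kernel_nz (P *m X)) => u [u_nz uPX u_supp].
have Dpos i : u 0 i != 0 -> 0 < D 0 i.
  by apply: contraNT => Di; rewrite u_supp.
have := form_diag_mx_gt0 u_nz Dpos.
have -> : u *m diag_mx D *m u ^t* =
          (u *m P) *m (P ^t* *m diag_mx D *m P) *m (u *m P) ^t*.
  by rewrite trmx_mul map_mxM !mulmxA -[u *m P *m P ^t*]mulmxA PPt mulmx1
             -[u *m _ *m P *m P ^t*]mulmxA PPt mulmx1.
rewrite decA mulmxBr mulmxBl !mulmxA; rewrite mulmxA in uPX.
rewrite uPX !mul0mx sub0r -[_ *m Y ^t* *m _]mulmxA -map_mxM -trmx_mul.
by rewrite mxE oppr_gt0 -dotmxE le_gtF ?dnorm_ge0.
Qed.

Lemma card_spectral_lt0_le n p q (P : 'M[C]_n) (D : 'rV[C]_n)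
    (X : 'M[C]_(n, p)) (Y : 'M[C]_(n, q)) :
  P \is unitarymx -> P ^t* *m diag_mx D *m P = X *m X ^t* - Y *m Y ^t* ->
  (#|[pred i : 'I_n | (D 0 i < 0)%R]| <= q)%N.
Proof.
move=> Pu decA.
have -> : #|[pred i : 'I_n | (D 0 i < 0)%R]| = #|[pred i | 0 < (- D) 0 i]|.
  by apply: eq_card => i; rewrite !inE mxE oppr_gt0.
apply: (card_spectral_gt0_le (X := Y) (Y := X) Pu).
by rewrite linearN /= mulmxN mulNmx decA opprB.
Qed.

End Inertia.

Lemma card_count_enum (T : finType) (P : pred T) : #|[pred i | P i]| = count P (enum T).
Proof.
rewrite cardE /enum_mem size_filter count_filter.
by apply: eq_count => x; rewrite !inE andbT.
Qed.

Section RealInertia.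
Local Open Scope sesquilinear_scope.
Local Open Scope complex_scope.
Variable R : rcfType.
Local Notation toC := (map_mx (real_complex R)).

Lemma conjtr_real_complex m p (X : 'M[R]_(m, p)) : (toC X) ^t* = toC X^T.
Proof.
apply/matrixP => i j; rewrite !mxE /=.
by apply/eqP; rewrite eq_complex /= oppr0 !eqxx.
Qed.

Variables (n p q : nat) (A : 'M[R]_n) (X : 'M[R]_(n, p)) (Y : 'M[R]_(n, q)).
Variables (s : seq R) (c : R).
Hypothesis charA : char_poly A = \prod_(x <- s) ('X - x%:P).
Hypothesis decA : A - c%:M = X *m X^T - Y *m Y^T.

Lemma shifted_spectral_decomposition :
  exists P : 'M[R[i]]_n, exists D : 'rV[R[i]]_n,
  [/\ P \is unitarymx,
      P ^t* *m diag_mx D *m P = toC X *m (toC X) ^t* - toC Y *m (toC Y) ^t*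
    & perm_eq [seq (x - c)%:C | x <- s] [seq D 0 i | i <- enum 'I_n]].
Proof.
have Asym : A^T = A.
  have : (A - c%:M)^T = A - c%:M by rewrite decA linearB /= !trmx_mul !trmxK.
  by rewrite linearB /= tr_scalar_mx => /addIr.
have /hermitian_normalmx/orthomx_spectralP decAC : toC A \is hermsymmx.
  by rewrite qualifE /= expr0 scale1r conjtr_real_complex Asym.
set P := spectralmx _ in decAC; set D := spectral_diag _ in decAC.
have Pu : P \is unitarymx := spectral_unitarymx _.
have PtP : P ^t* *m P = 1%:M by apply: mulmx1C; apply/unitarymxP.
rewrite invmx_unitary // in decAC.
exists P, (D - const_mx c%:C); split => //.
  rewrite linearB /= diag_const_mx mulmxBr mulmxBl -decAC mul_mx_scalar.
  rewrite -scalemxAl PtP scalemx1 -map_scalar_mx -map_mxB decA.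
  by rewrite map_mxB !map_mxM !conjtr_real_complex.
have permD : perm_eq [seq x%:C | x <- s] [seq D 0 i | i <- enum 'I_n].
  apply: prod_XsubC_eq; rewrite big_map -map_prod_XsubC -charA map_char_poly decAC.
  rewrite char_poly_similar // char_poly_trig ?diag_mx_is_trig // big_map big_enum /=.
  by apply: eq_bigr => i _; rewrite mxE eqxx mulr1n.
have := perm_map (fun z => z - c%:C) permD; rewrite -!map_comp.
by congr perm_eq; apply: eq_map => ? /=; rewrite ?rmorphB ?mxE.
Qed.

Lemma count_eigen_gt_le : (count (fun x => (c < x)%R) s <= p)%N.
Proof.
have [P [D [Pu decC permD]]] := shifted_spectral_decomposition.
suff -> : count (fun x => c < x) s = #|[pred i | (0 < D 0 i)%R]|.
  exact: card_spectral_gt0_le Pu decC.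
rewrite card_count_enum -(count_map (fun i => D 0 i) (>%R^~ 0)) -(permP permD).
by rewrite count_map; apply: eq_count => x; rewrite /= ltcE /= eqxx subr_gt0.
Qed.

Lemma count_eigen_lt_le : (count (fun x => (x < c)%R) s <= q)%N.
Proof.
have [P [D [Pu decC permD]]] := shifted_spectral_decomposition.
suff -> : count (fun x => x < c) s = #|[pred i | (D 0 i < 0)%R]|.
  exact: card_spectral_lt0_le Pu decC.
rewrite card_count_enum -(count_map (fun i => D 0 i) (<%R^~ 0)) -(permP permD).
by rewrite count_map; apply: eq_count => x; rewrite /= ltcE /= eqxx subr_lt0.
Qed.

End RealInertia.

Section SortedDescending.
Variable R : realDomainType.
Variables (s : seq R) (c : R).
Hypothesis s_sorted : sorted (fun x y => y <= x) s.

Lemma nth_ge_sorted i j : (i <= j < size s)%N -> s`_j <= s`_i.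
Proof.
move=> /andP[ij js]; have ge_trans : transitive (fun x y : R => y <= x).
  by move=> x y z yx zy; apply: le_trans zy yx.
by apply: (sorted_leq_nth ge_trans (fun x => lexx x)); rewrite ?inE //; lia.
Qed.

Lemma nth_le_of_count_gt k i :
  (count (fun x => (c < x)%R) s <= k)%N -> (k <= i < size s)%N -> s`_i <= c.
Proof.
move=> cnt /andP[ki isz]; rewrite leNgt; apply/negP => ci.
have : all (fun x => c < x) (take i.+1 s).
  apply/(all_nthP 0) => j; rewrite size_takel // => ji; rewrite nth_take //.
  by apply: lt_le_trans ci (nth_ge_sorted _); lia.
rewrite all_count size_takel // => /eqP take_cnt.
by move: cnt; rewrite -(cat_take_drop i.+1 s) count_cat take_cnt; lia.
Qed.

Lemma nth_ge_of_count_lt k i :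
  (count (fun x => (x < c)%R) s <= k)%N -> (i + k < size s)%N -> c <= s`_i.
Proof.
move=> cnt isz; rewrite leNgt; apply/negP => ic.
have : all (fun x => x < c) (drop i s).
  apply/(all_nthP 0) => j; rewrite size_drop => ji; rewrite nth_drop.
  by apply: le_lt_trans ic; apply: nth_ge_sorted; rewrite leq_addr -ltn_subRL.
rewrite all_count size_drop => /eqP drop_cnt.
move: cnt; rewrite -(cat_take_drop i s) count_cat drop_cnt => /(leq_trans (leq_addl _ _)).
by rewrite leq_subLR leqNgt isz.
Qed.

End SortedDescending.

Lemma count_pred1_ge (R : realDomainType) (s : seq R) c k :
  (count (fun x => (c < x)%R) s + count (fun x => (x < c)%R) s <= k)%N ->
  (size s - k <= count (pred1 c) s)%N.
Proof.
suff : (count (pred1 c) s + count (fun x => (c < x)%R) s + count (fun x => (x < c)%R) s)%N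
       = size s by lia.
by elim: s => //= x s IH; case: ltgtP; lia.
Qed.

Lemma gram_scale_sqrt (R : rcfType) m p (k : R) (X : 'M[R]_(m, p)) :
  0 <= k -> k *: (X *m X^T) = (Num.sqrt k *: X) *m (Num.sqrt k *: X)^T.
Proof.
by move=> k0; rewrite linearZ /= -scalemxAl -scalemxAr scalerA -expr2 sqr_sqrtr.
Qed.

Section SeidelShift.
Variables (R : realType) (n d : nat) (a b : R) (v : 'I_n -> 'rV[R]_d).
Hypothesis ab : a < b.

Let V : 'M[R]_(n, d) := \matrix_(i, k) v i 0 k.
Let ones : 'cV[R]_n := const_mx 1.
Let c := (a + b - 2) / (b - a).

Lemma seidelS_sub_scalar :
  seidelS a b v - c%:M =
  ((b - a)^-1 * 2) *: (V *m V^T) - ((b - a)^-1 * (a + b)) *: (ones *m ones^T).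
Proof.
have gramV : gram v = V *m V^T.
  by apply/matrixP => i j; rewrite !mxE; apply: eq_bigr => k _; rewrite !mxE.
have onesJ : const_mx 1 = ones *m ones^T.
  by apply/matrixP => i j; rewrite !mxE big_ord1 !mxE mulr1.
rewrite /seidelS gramV onesJ scalerDr scale_scalar_mx /c [_ / _]mulrC addrK.
by rewrite scalerBr !scalerA.
Qed.

Let inv_ba_ge0 : 0 <= (b - a)^-1.
Proof. by rewrite invr_ge0 subr_ge0 ltW. Qed.

Lemma seidelS_shift_gram_nonneg : 0 <= a + b ->
  exists (X : 'M[R]_(n, d)) (Y : 'M[R]_(n, 1)),
  seidelS a b v - c%:M = X *m X^T - Y *m Y^T.
Proof.
move=> ab_ge0; rewrite seidelS_sub_scalar.
by rewrite !gram_scale_sqrt ?mulr_ge0 ?inv_ba_ge0 //; do 2 eexists.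
Qed.

Lemma seidelS_shift_gram_neg : a + b < 0 ->
  exists X : 'M[R]_(n, d + 1), seidelS a b v - c%:M = X *m X^T.
Proof.
move=> ab_lt0; rewrite seidelS_sub_scalar -scaleNr -mulrN.
rewrite !gram_scale_sqrt ?mulr_ge0 ?inv_ba_ge0 ?oppr_ge0 ?(ltW ab_lt0) //.
exists (row_mx (Num.sqrt ((b - a)^-1 * 2) *: V) (Num.sqrt ((b - a)^-1 * - (a + b)) *: ones)).
by rewrite tr_row_mx mul_row_col.
Qed.

End SeidelShift.

Theorem mainTheorem6 (R : realType) (n d : nat) (a b : R)
    (v : 'I_n -> 'rV[R]_d) (s : seq R) :
  -1 <= a -> a < b -> b < 1 ->
  (forall i, dotv (v i) (v i) = 1) ->
  (forall i j, i != j -> dotv (v i) (v j) = a \/ dotv (v i) (v j) = b) ->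
  eigenvalues_desc (seidelS a b v) s ->
  let c := (a + b - 2) / (b - a) in
  (0 <= a + b ->
     (forall i : nat, (d <= i)%N -> (i < n.-1)%N -> s`_i = c) /\
     ((d < n)%N -> s`_(n.-1) <= c)) /\
  (a + b < 0 ->
     (forall i : nat, (i < n)%N -> c <= s`_i) /\
     (n - d.+1 <= count (pred1 c) s)%N /\
     ((d.+1 < n)%N -> s`_(n.-1) = c)).
Proof.
move=> _ ab _ _ _ [s_sorted charS] c.
have sz : size s = n.
  by have := size_char_poly (seidelS a b v); rewrite charS size_prod_XsubC => -[].
split=> [ab_ge0 | ab_lt0].
  have [X [Y decS]] := seidelS_shift_gram_nonneg v ab ab_ge0.
  have gt_c := count_eigen_gt_le charS decS.
  have lt_c := count_eigen_lt_le charS decS.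
  split=> [i di ilt | dn]; last first.
    by apply: (nth_le_of_count_gt s_sorted gt_c); rewrite sz; lia.
  apply/le_anti; rewrite (nth_le_of_count_gt s_sorted gt_c) /=; last lia.
  by apply: (nth_ge_of_count_lt s_sorted lt_c); rewrite sz; lia.
have [X decX] := seidelS_shift_gram_neg v ab ab_lt0.
have decS : seidelS a b v - c%:M = X *m X^T - 0 *m (0 : 'M_(n, 0))^T.
  by rewrite mul0mx subr0.
have gt_c := count_eigen_gt_le charS decS.
have lt_c := count_eigen_lt_le charS decS.
have ge_c i : (i < n)%N -> c <= s`_i.
  by move=> ?; apply: (nth_ge_of_count_lt s_sorted lt_c); rewrite sz; lia.
split=> //; split=> [|dn].
  rewrite -sz count_pred1_ge // (leq_trans (leq_add gt_c lt_c)) //.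
  by rewrite addn0 addn1.
apply/le_anti; rewrite ge_c ?andbT; last lia.
by apply: (nth_le_of_count_gt s_sorted gt_c); rewrite sz; lia.
Qed.
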